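(* Let $\mathcal A\subset\mathbb{R}^d$ be finite, $\lambda\in\mathbb{R}^{\mathcal A}$ and $w\in\mathbb{R}^{\mathcal A}_>$. Then the family $\lambda(t).X_{\mathcal A,w}$ has a limit as $t\to\infty$ in the Hausdorff topology on closed subsets of $\Delta^{\mathcal A}$, and $\lim_{t\to\infty}\lambda(t).X_{\mathcal A,w}=X(\mathcal S_\lambda,w)$, where $\mathcal S_\lambda$ is the regular subdivision of $\mathcal A$ induced by $\lambda$.
   Context: $\Delta^{\mathcal A}=\{z\in\mathbb{R}_{\ge0}^{\mathcal A}\mid\sum_{\mathbf a}z_{\mathbf a}=1\}$ with homogeneous coordinates and the $\ell_1$ metric $d(y,z)=\sum_{\mathbf a}|y_{\mathbf a}-z_{\mathbf a}|$; the Hausdorff distance between closed sets $X,Y$ is $\max\{\sup_{x\in X}\inf_{y\in Y}d(x,y),\sup_{y\in Y}\inf_{x\in X}d(x,y)\}$. For $\mathcal F\subset\mathcal A$, $\Delta^{\mathcal F}\subset\Delta^{\mathcal A}$ is the face with $z_{\mathbf a}=0$ for $\mathbf a\notin\mathcal F$. For $x\in\mathbb{R}^d_>$, $x^{\mathbf a}=\prod_j\exp(\mathbf a_j\log x_j)$. For $w\in\mathbb{R}^{\mathcal A}_>$, $X_{\mathcal F,w}$ is the closure in $\Delta^{\mathcal F}$ of $\{[w_{\mathbf f}x^{\mathbf f}\mid\mathbf f\in\mathcal F]\mid x\in\mathbb{R}^d_>\}$ (a real irrational toric variety, translated by $w$); $X_{\mathcal A,w}$ is the case $\mathcal F=\mathcal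 A$. The torus acts by $u.z=[u_{\mathbf a}z_{\mathbf a}]$. For $\lambda\in\mathbb{R}^{\mathcal A}$, $\lambda(t)\in\mathbb{R}^{\mathcal A}_>$ has coordinates $\lambda(t)_{\mathbf a}=\exp(t\lambda(\mathbf a))$. Regular subdivision: let $P_\lambda=\mathrm{conv}\{(\mathbf a,\lambda(\mathbf a))\}\subset\mathbb{R}^{d+1}$; upper faces are faces with an outward normal having positive last coordinate; $\mathcal S_\lambda$ is the collection of sets $\{\mathbf a\in\mathcal A\mid(\mathbf a,\lambda(\mathbf a))\in F\}$ for $F$ an upper face (the faces of $\mathcal S_\lambda$). For a subdivision $\mathcal S$, $X(\mathcal S,w):=\bigcup_{\mathcal F\text{ a face of }\mathcal S}X_{\mathcal F,w}$. *)

From Stdlib Require Import Reals.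
Open Scope R_scope.

(* Conventions:
   - The finite configuration A ⊂ R^d is given by N points A 0, ..., A (N-1),
     where A i : nat -> R has coordinates A i 0, ..., A i (d-1).
   - Elements of R^A (and points of Δ^A) are functions nat -> R, indexed by
     the labels 0..N-1 of the points of A.
   - A subset F ⊆ A is a predicate on the labels. *)

Definition Rset := (nat -> R) -> Prop.

Fixpoint rsum (n : nat) (f : nat -> R) : R :=
  match n with
  | O => 0
  | S m => rsum m f + f m
  end.

(* the standard simplex Δ^A (entries beyond the labels are normalised to 0) *)
Definition in_simplex (N : nat) (z : nat -> R) : Prop :=
  (forall i, (i < N)%nat -> 0 <= z i) /\
  rsum N z = 1 /\
  (forall i, (N <= i)%nat -> z i = 0).

Definition in_face_simplex (N : nat) (F : nat -> Prop) (z : nat -> R) : Prop :=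
  in_simplex N z /\ (forall i, (i < N)%nat -> ~ F i -> z i = 0).

Definition dist1 (N : nat) (y z : nat -> R) : R :=
  rsum N (fun i => Rabs (y i - z i)).

(* x^a = prod_j exp(a_j log x_j) *)
Definition monomial (d : nat) (x a : nat -> R) : R :=
  exp (rsum d (fun j => a j * ln (x j))).

Definition positive_vec (n : nat) (x : nat -> R) : Prop :=
  forall j, (j < n)%nat -> 0 < x j.

(* z = [w_f x^f | f ∈ F] in homogeneous coordinates on Δ^F:
   z ∈ Δ^F and z is proportional (positive factor) to (w_f x^f)_{f∈F} *)
Definition torus_orbit_pt (d N : nat) (A : nat -> nat -> R) (F : nat -> Prop)
    (w : nat -> R) (z : nat -> R) : Prop :=
  in_face_simplex N F z /\
  exists x : nat -> R, positive_vec d x /\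
    exists c : R, 0 < c /\
      forall i, (i < N)%nat -> F i -> z i = c * (w i * monomial d x (A i)).

Definition closure_in (N : nat) (F : nat -> Prop) (S : Rset) : Rset :=
  fun z => in_face_simplex N F z /\
    forall eps, 0 < eps -> exists y, S y /\ dist1 N z y < eps.

Definition X_Fw (d N : nat) (A : nat -> nat -> R) (F : nat -> Prop)
    (w : nat -> R) : Rset :=
  closure_in N F (torus_orbit_pt d N A F w).

Definition torus_act (N : nat) (u z y : nat -> R) : Prop :=
  in_simplex N y /\
  exists c, 0 < c /\ forall i, (i < N)%nat -> y i = c * (u i * z i).

Definition act_set (N : nat) (u : nat -> R) (X : Rset) : Rset :=
  fun y => exists z, X z /\ torus_act N u z y.

Definition lam_t (lam : nat -> R) (t : R) : nat -> R :=
  fun i => exp (t * lam i).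

Definition lift (d : nat) (A : nat -> nat -> R) (lam : nat -> R) (i : nat)
    : nat -> R :=
  fun k => if Nat.eqb k d then lam i else A i k.

Definition dot (n : nat) (u v : nat -> R) : R := rsum n (fun k => u k * v k).

Definition in_P (d N : nat) (A : nat -> nat -> R) (lam : nat -> R)
    (p : nat -> R) : Prop :=
  exists mu : nat -> R,
    (forall i, (i < N)%nat -> 0 <= mu i) /\ rsum N mu = 1 /\
    forall k, (k <= d)%nat -> p k = rsum N (fun i => mu i * lift d A lam i k).

Definition face_with_normal (d N : nat) (A : nat -> nat -> R) (lam : nat -> R)
    (nrm : nat -> R) (p : nat -> R) : Prop :=
  in_P d N A lam p /\
  forall q, in_P d N A lam q -> dot (S d) nrm q <= dot (S d) nrm p.

(* F is a face of S_λ: F = {a ∈ A | (a,λ(a)) ∈ G} for an upper face G of P_λ,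
   i.e. a face with an outward normal whose last coordinate is positive *)
Definition face_of_Slam (d N : nat) (A : nat -> nat -> R) (lam : nat -> R)
    (F : nat -> Prop) : Prop :=
  exists nrm : nat -> R, 0 < nrm d /\
    forall i, F i <-> ((i < N)%nat /\ face_with_normal d N A lam nrm (lift d A lam i)).

Definition X_subdiv (d N : nat) (A : nat -> nat -> R) (lam w : nat -> R) : Rset :=
  fun z => exists F, face_of_Slam d N A lam F /\ X_Fw d N A F w z.

(* Hausdorff convergence of closed subsets of Δ^A as t -> ∞:
   for every eps > 0, eventually each set lies in the eps-neighbourhood of the other
   (equivalent to: Hausdorff distance -> 0). *)
Definition hausdorff_conv (N : nat) (Xt : R -> Rset) (Y : Rset) : Prop :=
  forall eps, 0 < eps -> exists T, forall t, T < t ->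
    (forall x, Xt t x -> exists y, Y y /\ dist1 N x y < eps) /\
    (forall y, Y y -> exists x, Xt t x /\ dist1 N x y < eps).

From Stdlib Require Import Reals Lra Lia List Classical ClassicalEpsilon
  PropExtensionality FunctionalExtensionality.
Open Scope R_scope.

(** Write [height v i = lam_i + <a_i, v>] for the height of the lifted point
    [(a_i, lam_i)] in the direction [(v, 1)].  The faces of [S_lam] are exactly the
    sets of labels of maximal height ([top_face]), and up to an arbitrarily small
    error a point of [lam(t).X_(A,w)] is the normalisation of [w_i exp(t height v i)]
    for some direction [v].
    - Points of the family are close to the limit.  Fourier-Motzkin elimination shows
      that approximately feasible linear systems are feasible; hence there is a
      uniform gap [c > 0] such that the labels within [c] of the top are all top
      labels for a single direction [v'].  The mass off that face is [O(exp(-tc))],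
      and the renormalised restriction to the face lies in [X_(F,w)].
    - Points of the limit are approached.  A point of [X_(F,w)] is approached by
      pushing an orbit point of the face along the direction defining [F]; this is
      made uniform over [X_(F,w)] by a finite grid of the simplex, and over the limit
      because there are finitely many faces. *)

Lemma rsum_ext n f g : (forall i, (i < n)%nat -> f i = g i) -> rsum n f = rsum n g.
Proof.
  induction n as [|n IH]; simpl; intros H; auto.
  rewrite IH by (intros; apply H; lia). rewrite (H n) by lia. reflexivity.
Qed.

Lemma rsum_plus n f g : rsum n (fun i => f i + g i) = rsum n f + rsum n g.
Proof. induction n; simpl; [lra | rewrite IHn; lra]. Qed.

Lemma rsum_minus n f g : rsum n (fun i => f i - g i) = rsum n f - rsum n g.
Proof. induction n; simpl; [lra | rewrite IHn; lra]. Qed.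

Lemma rsum_scal n c f : rsum n (fun i => c * f i) = c * rsum n f.
Proof. induction n; simpl; [lra | rewrite IHn; lra]. Qed.

Lemma rsum_zero n : rsum n (fun _ => 0) = 0.
Proof. induction n; simpl; [lra | rewrite IHn; lra]. Qed.

Lemma rsum_le n f g : (forall i, (i < n)%nat -> f i <= g i) -> rsum n f <= rsum n g.
Proof.
  induction n as [|n IH]; simpl; intros H; [lra|].
  assert (f n <= g n) by (apply H; lia).
  assert (rsum n f <= rsum n g) by (apply IH; intros; apply H; lia). lra.
Qed.

Lemma rsum_nonneg n f : (forall i, (i < n)%nat -> 0 <= f i) -> 0 <= rsum n f.
Proof. intros H. rewrite <- (rsum_zero n). apply rsum_le. auto. Qed.

Lemma rsum_pos n f : (0 < n)%nat -> (forall i, (i < n)%nat -> 0 < f i) -> 0 < rsum n f.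
Proof.
  intros Hn Hf. destruct n as [|n]; [lia|]. simpl.
  assert (0 <= rsum n f) by (apply rsum_nonneg; intros; apply Rlt_le, Hf; lia).
  specialize (Hf n ltac:(lia)). lra.
Qed.

Lemma rsum_const_le n f b : (forall i, (i < n)%nat -> f i <= b) -> rsum n f <= INR n * b.
Proof.
  induction n as [|n IH]; cbn [rsum]; intros H; [simpl; lra|].
  assert (f n <= b) by (apply H; lia).
  assert (rsum n f <= INR n * b) by (apply IH; intros; apply H; lia).
  rewrite S_INR. lra.
Qed.

Lemma rsum_elem_le n f j :
  (forall i, (i < n)%nat -> 0 <= f i) -> (j < n)%nat -> f j <= rsum n f.
Proof.
  induction n as [|n IH]; simpl; intros H Hj; [lia|].
  destruct (Nat.eq_dec j n) as [->|Hjn].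
  - assert (0 <= rsum n f) by (apply rsum_nonneg; intros; apply H; lia). lra.
  - assert (f j <= rsum n f) by (apply IH; [intros; apply H|]; lia).
    assert (0 <= f n) by (apply H; lia). lra.
Qed.

Lemma rsum_abs n f : Rabs (rsum n f) <= rsum n (fun i => Rabs (f i)).
Proof.
  induction n; simpl; [rewrite Rabs_R0; lra|].
  eapply Rle_trans; [apply Rabs_triang | lra].
Qed.

Lemma rsum_swap n m (f : nat -> nat -> R) :
  rsum n (fun i => rsum m (fun j => f i j)) = rsum m (fun j => rsum n (fun i => f i j)).
Proof.
  induction n; simpl; [rewrite rsum_zero; reflexivity|].
  rewrite IHn, <- rsum_plus. reflexivity.
Qed.

Lemma rsum_indic_mul n j f :
  (j < n)%nat -> rsum n (fun i => (if Nat.eqb i j then 1 else 0) * f i) = f j.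
Proof.
  induction n as [|n IH]; simpl; intros Hj; [lia|].
  destruct (Nat.eq_dec j n) as [->|Hjn].
  - rewrite Nat.eqb_refl, (rsum_ext _ _ (fun _ => 0)), rsum_zero; [lra|].
    intros i Hi. destruct (Nat.eqb_spec i n); [lia | lra].
  - destruct (Nat.eqb_spec n j); [lia|]. rewrite IH by lia. lra.
Qed.

Definition dec (P : Prop) : bool := if excluded_middle_informative P then true else false.

Lemma dec_true (P : Prop) : P -> dec P = true.
Proof. unfold dec; destruct (excluded_middle_informative P); tauto. Qed.

Lemma dec_false (P : Prop) : ~ P -> dec P = false.
Proof. unfold dec; destruct (excluded_middle_informative P); tauto. Qed.

Lemma dec_spec (P : Prop) : if dec P then P else ~ P.
Proof. unfold dec; destruct (excluded_middle_informative P); auto. Qed.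

Lemma pred_ext (F G : nat -> Prop) : (forall i, F i <-> G i) -> F = G.
Proof.
  intros H. apply functional_extensionality. intros i.
  apply propositional_extensionality, H.
Qed.

Lemma dist1_sym N x y : dist1 N x y = dist1 N y x.
Proof. apply rsum_ext. intros. apply Rabs_minus_sym. Qed.

Lemma dist1_triangle N x y z : dist1 N x z <= dist1 N x y + dist1 N y z.
Proof.
  unfold dist1. rewrite <- rsum_plus. apply rsum_le. intros.
  replace (x i - z i) with ((x i - y i) + (y i - z i)) by ring. apply Rabs_triang.
Qed.

Lemma dist1_nonneg N x y : 0 <= dist1 N x y.
Proof. apply rsum_nonneg. intros; apply Rabs_pos. Qed.

Lemma dist1_refl N x : dist1 N x x = 0.
Proof.
  unfold dist1. rewrite (rsum_ext _ _ (fun _ => 0)); [apply rsum_zero|].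
  intros. rewrite Rminus_diag, Rabs_R0. reflexivity.
Qed.

Lemma fin_pos_bounds n (a : nat -> R) : (forall i, (i < n)%nat -> 0 < a i) ->
  exists lo hi, 0 < lo /\ forall i, (i < n)%nat -> lo <= a i <= hi.
Proof.
  induction n as [|n IH]; intros Ha.
  - exists 1, 0. split; [lra | intros; lia].
  - destruct IH as [lo [hi [Hlo Hb]]]; [intros; apply Ha; lia|].
    assert (0 < a n) by (apply Ha; lia).
    exists (Rmin lo (a n)), (Rmax hi (a n)). split; [apply Rmin_pos; lra|].
    intros i Hi. destruct (Nat.eq_dec i n) as [->|Hin].
    + split; [apply Rmin_r | apply Rmax_r].
    + destruct (Hb i ltac:(lia)).
      pose proof (Rmin_l lo (a n)); pose proof (Rmax_l hi (a n)). lra.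
Qed.

Lemma fin_pos_min n (Q : nat -> Prop) (a : nat -> R) :
  (forall i, (i < n)%nat -> Q i -> 0 < a i) ->
  exists m, 0 < m /\ forall i, (i < n)%nat -> Q i -> m <= a i.
Proof.
  intros Ha. destruct (fin_pos_bounds n (fun i => if dec (Q i) then a i else 1))
    as [lo [hi [Hlo Hb]]].
  { intros i Hi. pose proof (dec_spec (Q i)). destruct (dec (Q i)); auto; lra. }
  exists lo. split; auto. intros i Hi HQ. specialize (Hb i Hi).
  rewrite dec_true in Hb by auto. lra.
Qed.

Lemma fin_argmax n (a : nat -> R) :
  (0 < n)%nat -> exists j, (j < n)%nat /\ forall i, (i < n)%nat -> a i <= a j.
Proof.
  induction n as [|n IH]; intros Hn; [lia|].
  destruct (Nat.eq_dec n 0) as [->|Hn0].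
  - exists 0%nat. split; [lia|]. intros i Hi. replace i with 0%nat by lia. lra.
  - destruct IH as [j [Hj Hmax]]; [lia|].
    destruct (Rle_dec (a n) (a j)).
    + exists j. split; [lia|]. intros i Hi.
      destruct (Nat.eq_dec i n) as [->|]; [lra | apply Hmax; lia].
    + exists n. split; [lia|]. intros i Hi.
      destruct (Nat.eq_dec i n) as [->|]; [lra|]. specialize (Hmax i ltac:(lia)). lra.
Qed.

Lemma exp_decay C c eps : 0 < c -> 0 < eps ->
  exists T, forall t, T < t -> C * exp (- (t * c)) < eps.
Proof.
  intros Hc Heps. set (C' := Rabs C + 1).
  assert (HC' : 0 < C') by (unfold C'; pose proof (Rabs_pos C); lra).
  exists (Rabs (ln (eps / C')) / c). intros t Ht.
  assert (Hlt : exp (- (t * c)) < eps / C').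
  { rewrite <- (exp_ln (eps / C')) by (apply Rdiv_lt_0_compat; lra).
    apply exp_increasing.
    assert (Rabs (ln (eps / C')) < t * c).
    { apply (Rmult_lt_compat_r c) in Ht; auto.
      unfold Rdiv in Ht. rewrite Rmult_assoc, Rinv_l in Ht; lra. }
    pose proof (Rle_abs (- ln (eps / C'))). rewrite Rabs_Ropp in *. lra. }
  assert (C * exp (- (t * c)) <= C' * exp (- (t * c))).
  { apply Rmult_le_compat_r; [apply Rlt_le, exp_pos|].
    unfold C'; pose proof (Rle_abs C); lra. }
  apply (Rmult_lt_compat_l C') in Hlt; auto.
  replace (C' * (eps / C')) with eps in Hlt by (field; lra). lra.
Qed.

Lemma common_pos_param K (Q : nat -> R -> Prop) :
  (forall k e e', 0 < e' -> e' <= e -> Q k e -> Q k e') ->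
  (forall k, (k <= K)%nat -> exists e, 0 < e /\ Q k e) ->
  exists e, 0 < e /\ forall k, (k <= K)%nat -> Q k e.
Proof.
  intros Hmono. induction K as [|K IH]; intros H.
  - destruct (H 0%nat) as [e [He Qe]]; [lia|]. exists e. split; auto.
    intros k Hk. replace k with 0%nat by lia. auto.
  - destruct IH as [e [He Qe]]; [intros; apply H; lia|].
    destruct (H (S K)) as [e' [He' Qe']]; [lia|].
    exists (Rmin e e'). split; [apply Rmin_pos; auto|].
    intros k Hk. destruct (Nat.eq_dec k (S K)) as [->|].
    + eapply Hmono; [apply Rmin_pos; auto | apply Rmin_r | auto].
    + eapply Hmono; [apply Rmin_pos; auto | apply Rmin_l | apply Qe; lia].
Qed.

Definition upd (f : nat -> nat) (n k : nat) : nat -> nat :=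
  fun i => if Nat.eqb i n then k else f i.

Lemma common_pos_param_maps M N (P : (nat -> nat) -> R -> Prop) :
  (forall f g e, (forall i, (i < N)%nat -> f i = g i) -> P f e -> P g e) ->
  (forall f e e', 0 < e' -> e' <= e -> P f e -> P f e') ->
  (forall f, (forall i, (f i <= M)%nat) -> exists e, 0 < e /\ P f e) ->
  exists e, 0 < e /\ forall f, (forall i, (f i <= M)%nat) -> P f e.
Proof.
  revert P. induction N as [|N IH]; intros P Hext Hmono H.
  - destruct (H (fun _ => 0%nat)) as [e [He Pe]]; [intros; lia|].
    exists e. split; auto. intros f _. eapply Hext; [|apply Pe]. intros; lia.
  - destruct (IH (fun f e => forall k, (k <= M)%nat -> P (upd f N k) e)) as [e [He Pe]].
    + intros f g e Hfg Hf k Hk. eapply Hext; [|apply (Hf k Hk)].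
      intros i Hi. unfold upd. destruct (Nat.eqb_spec i N); auto. apply Hfg; lia.
    + intros f e e' H1 H2 Hf k Hk. eapply Hmono; eauto.
    + intros f Hf. apply common_pos_param; [intros; eapply Hmono; eauto|].
      intros k Hk. apply H. intros i. unfold upd. destruct (Nat.eqb i N); auto.
    + exists e. split; auto. intros f Hf.
      eapply Hext; [|apply (Pe f Hf (f N) (Hf N))].
      intros i Hi. unfold upd. destruct (Nat.eqb_spec i N); subst; auto.
Qed.

Lemma eventually_uniform_maps M N (P : (nat -> nat) -> R -> Prop) :
  (forall f g T, (forall i, (i < N)%nat -> f i = g i) -> P f T -> P g T) ->
  (forall f T T', T <= T' -> P f T -> P f T') ->
  (forall f, (forall i, (f i <= M)%nat) -> exists T, P f T) ->
  exists T, forall f, (forall i, (f i <= M)%nat) -> P f T.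
Proof.
  intros Hext Hmono H.
  destruct (common_pos_param_maps M N (fun f e => P f (/ e))) as [e [He Pe]].
  - intros f g e. apply Hext.
  - intros f e e' He' Hle. apply Hmono, Rinv_le_contravar; auto.
  - intros f Hf. destruct (H f Hf) as [T HT].
    exists (/ (Rabs T + 1)). pose proof (Rabs_pos T). split.
    + apply Rinv_0_lt_compat. lra.
    + rewrite Rinv_inv. apply (Hmono f T); auto. pose proof (Rle_abs T). lra.
  - exists (/ e). auto.
Qed.

(** * Fourier-Motzkin: approximately feasible linear systems are feasible *)

(** A row [(a, b)] encodes the inequality [sum_(j<n) a_j v_j <= b]. *)
Definition Row := ((nat -> R) * R)%type.

Definition lhs (n : nat) (r : Row) (v : nat -> R) : R := rsum n (fun j => fst r j * v j).

Definition feasible (n : nat) (L : list Row) : Prop :=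
  exists v, forall r, In r L -> lhs n r v <= snd r.

Definition approx_feasible (n : nat) (L : list Row) : Prop :=
  forall e, 0 < e -> exists v, forall r, In r L -> lhs n r v <= snd r + e.

Lemma lhs_S n r v : lhs (S n) r v = lhs n r v + fst r n * v n.
Proof. reflexivity. Qed.

Lemma lhs_ext n r v v' : (forall j, (j < n)%nat -> v j = v' j) -> lhs n r v = lhs n r v'.
Proof. intros H. apply rsum_ext. intros j Hj. rewrite H; auto. Qed.

Lemma list_abs_bound (L : list Row) n :
  exists B, 0 <= B /\ forall r, In r L -> Rabs (fst r n) <= B.
Proof.
  induction L as [|r0 L [B [HB Hr]]].
  - exists 0. split; [lra | intros _ []].
  - exists (Rmax B (Rabs (fst r0 n))). split; [eapply Rle_trans; [apply HB | apply Rmax_l]|].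
    intros r [<-|Hin]; [apply Rmax_r|].
    eapply Rle_trans; [apply Hr, Hin | apply Rmax_l].
Qed.

Lemma list_argmax {T} (l : list T) (f : T -> R) :
  l <> nil -> exists x, In x l /\ forall y, In y l -> f y <= f x.
Proof.
  induction l as [|a l IH]; intros H; [congruence|].
  destruct l as [|b l'].
  - exists a. split; [left; auto|]. intros y [->|[]]; lra.
  - destruct IH as [x [Hx Hmax]]; [congruence|].
    destruct (Rle_dec (f a) (f x)).
    + exists x. split; [right; auto|]. intros y [<-|Hy]; auto.
    + exists a. split; [left; auto|]. intros y [<-|Hy]; [lra|]. specialize (Hmax y Hy). lra.
Qed.

Lemma separating_point {T} (lo hi : list T) (f g : T -> R) :
  (forall a b, In a lo -> In b hi -> f a <= g b) ->
  exists x, (forall a, In a lo -> f a <= x) /\ (forall b, In b hi -> x <= g b).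
Proof.
  intros H. destruct lo as [|a0 lo'] eqn:Elo.
  - destruct hi as [|b0 hi'] eqn:Ehi.
    + exists 0. split; intros ? [].
    + destruct (list_argmax (b0 :: hi') (fun b => - g b)) as [b [Hb Hmin]]; [congruence|].
      exists (g b). split; [intros ? []|]. intros b' Hb'. specialize (Hmin b' Hb'). lra.
  - destruct (list_argmax (a0 :: lo') f) as [a [Ha Hmax]]; [congruence|].
    exists (f a). split; auto.
Qed.

(** Eliminating variable [n] between a row [p] with positive and a row [q] with
    negative [n]-th coefficient. *)
Definition comb (n : nat) (p q : Row) : Row :=
  (fun j => (- fst q n) * fst p j + fst p n * fst q j,
   (- fst q n) * snd p + fst p n * snd q).

Lemma lhs_comb n p q v :
  lhs n (comb n p q) v = (- fst q n) * lhs n p v + fst p n * lhs n q v.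
Proof.
  unfold lhs, comb; simpl. rewrite <- !rsum_scal, <- rsum_plus.
  apply rsum_ext. intros; ring.
Qed.

Definition rows_pos n (L : list Row) := filter (fun r => dec (0 < fst r n)) L.
Definition rows_neg n (L : list Row) := filter (fun r => dec (fst r n < 0)) L.

Definition fm_elim (n : nat) (L : list Row) : list Row :=
  filter (fun r => dec (fst r n = 0)) L ++
  flat_map (fun p => map (comb n p) (rows_neg n L)) (rows_pos n L).

Lemma in_dec_filter (L : list Row) (P : Row -> Prop) r :
  In r (filter (fun r => dec (P r)) L) <-> In r L /\ P r.
Proof.
  rewrite filter_In. pose proof (dec_spec (P r)).
  destruct (dec (P r)); intuition congruence.
Qed.

Lemma in_fm_elim n L r : In r (fm_elim n L) ->
  (In r L /\ fst r n = 0) \/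
  exists p q, In p L /\ 0 < fst p n /\ In q L /\ fst q n < 0 /\ r = comb n p q.
Proof.
  unfold fm_elim. rewrite in_app_iff, in_dec_filter, in_flat_map.
  intros [Hz|[p [Hp Hr]]]; [left; auto|right].
  apply in_map_iff in Hr. destruct Hr as [q [<- Hq]].
  unfold rows_pos, rows_neg in *. rewrite in_dec_filter in Hp, Hq.
  exists p, q. tauto.
Qed.

Lemma fm_elim_zero n L r : In r L -> fst r n = 0 -> In r (fm_elim n L).
Proof. intros. unfold fm_elim. apply in_or_app. left. apply in_dec_filter. auto. Qed.

Lemma fm_elim_comb n L p q : In p L -> 0 < fst p n -> In q L -> fst q n < 0 ->
  In (comb n p q) (fm_elim n L).
Proof.
  intros. unfold fm_elim. apply in_or_app. right. apply in_flat_map. exists p.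
  split; [apply in_dec_filter; auto|]. apply in_map, in_dec_filter. auto.
Qed.

(** Elimination preserves approximate feasibility: an [e0]-solution of [L] gives
    an [e0 (|p_n| + |q_n|)]-solution of each combined row. *)
Lemma fm_elim_approx n L : approx_feasible (S n) L -> approx_feasible n (fm_elim n L).
Proof.
  intros H e He. destruct (list_abs_bound L n) as [B [HB Hbound]].
  set (e0 := e / (1 + 2 * B)).
  assert (He0 : 0 < e0) by (apply Rdiv_lt_0_compat; lra).
  assert (He0B : e0 * (1 + 2 * B) = e) by (unfold e0; field; lra).
  destruct (H e0 He0) as [v Hv]. exists v. intros r Hr.
  destruct (in_fm_elim n L r Hr) as [[HrL Hr0]|[p [q [Hp [Hp0 [Hq [Hq0 ->]]]]]]].
  - specialize (Hv r HrL). rewrite lhs_S, Hr0 in Hv. nra.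
  - pose proof (Hv p Hp) as Hvp. pose proof (Hv q Hq) as Hvq. rewrite lhs_S in Hvp, Hvq.
    pose proof (Hbound p Hp) as Bp. pose proof (Hbound q Hq) as Bq.
    rewrite Rabs_right in Bp by lra. rewrite Rabs_left in Bq by lra.
    rewrite lhs_comb. unfold comb; simpl. nra.
Qed.

(** Conversely a solution of the eliminated system extends to one of [L]: the
    value of variable [n] is squeezed between the bounds imposed by the rows. *)
Lemma fm_elim_lift n L : feasible n (fm_elim n L) -> feasible (S n) L.
Proof.
  intros [v' Hv']. set (rest := fun r => lhs n r v').
  set (bound := fun r : Row => (snd r - rest r) / fst r n).
  destruct (separating_point (rows_neg n L) (rows_pos n L) bound bound) as [vn [Hlo Hhi]].
  { intros q p Hq Hp. unfold rows_pos, rows_neg in *. rewrite in_dec_filter in Hp, Hq.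
    destruct Hp as [Hp Hp0], Hq as [Hq Hq0].
    specialize (Hv' _ (fm_elim_comb n L p q Hp Hp0 Hq Hq0)).
    rewrite lhs_comb in Hv'. unfold comb in Hv'; simpl in Hv'. fold (rest p) (rest q) in Hv'.
    unfold bound. apply Rmult_le_reg_r with (fst p n * - fst q n); [nra|].
    replace ((snd q - rest q) / fst q n * (fst p n * - fst q n))
      with (fst p n * (rest q - snd q)) by (field; lra).
    replace ((snd p - rest p) / fst p n * (fst p n * - fst q n))
      with (- fst q n * (snd p - rest p)) by (field; lra).
    lra. }
  exists (fun j => if Nat.eqb j n then vn else v' j). intros r Hr.
  rewrite lhs_S, Nat.eqb_refl.
  rewrite (lhs_ext n r _ v') by (intros j Hj; destruct (Nat.eqb_spec j n); [lia | auto]).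
  fold (rest r).
  destruct (Rtotal_order (fst r n) 0) as [Hneg|[H0|Hpos]].
  - assert (Hb : bound r <= vn) by (apply Hlo, in_dec_filter; auto).
    unfold bound in Hb. apply (Rmult_le_compat_neg_l (fst r n)) in Hb; [|lra].
    replace (fst r n * ((snd r - rest r) / fst r n)) with (snd r - rest r) in Hb
      by (field; lra). lra.
  - specialize (Hv' r (fm_elim_zero n L r Hr H0)). rewrite H0. fold (rest r) in Hv'. lra.
  - assert (Hb : vn <= bound r) by (apply Hhi, in_dec_filter; auto).
    unfold bound in Hb. apply (Rmult_le_compat_l (fst r n)) in Hb; [|lra].
    replace (fst r n * ((snd r - rest r) / fst r n)) with (snd r - rest r) in Hb
      by (field; lra). lra.
Qed.

(** The closedness property behind the uniform gap of the key lemma. *)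
Theorem approx_feasible_feasible n L : approx_feasible n L -> feasible n L.
Proof.
  revert L. induction n as [|n IH]; intros L H.
  - exists (fun _ => 0). intros r Hr. apply Rnot_lt_le. intros Hlt.
    destruct (H (- snd r / 2)) as [v Hv]; [unfold lhs in Hlt; simpl in Hlt; lra|].
    specialize (Hv r Hr). unfold lhs in *; simpl in *. lra.
  - apply fm_elim_lift, IH, fm_elim_approx, H.
Qed.

(** * Heights and the faces of the regular subdivision *)

Section Subdivision.

Variables (d N : nat) (A : nat -> nat -> R) (lam : nat -> R).

Definition height (v : nat -> R) (i : nat) : R := lam i + rsum d (fun j => A i j * v j).

Definition top_face (v : nat -> R) (i : nat) : Prop :=
  (i < N)%nat /\ forall j, (j < N)%nat -> height v j <= height v i.

Lemma dot_lift nrm i :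
  dot (S d) nrm (lift d A lam i) = rsum d (fun k => nrm k * A i k) + nrm d * lam i.
Proof.
  unfold dot. simpl. unfold lift at 2. rewrite Nat.eqb_refl. f_equal.
  apply rsum_ext. intros k Hk. unfold lift. destruct (Nat.eqb_spec k d); [lia | auto].
Qed.

Lemma in_P_lift i : (i < N)%nat -> in_P d N A lam (lift d A lam i).
Proof.
  intros Hi. exists (fun j => if Nat.eqb j i then 1 else 0). split; [|split].
  - intros j _. destruct (Nat.eqb j i); lra.
  - transitivity (rsum N (fun j => (if Nat.eqb j i then 1 else 0) * 1)).
    + apply rsum_ext. intros; ring.
    + apply (rsum_indic_mul N i (fun _ => 1)); auto.
  - intros k _. symmetry. apply (rsum_indic_mul N i (fun j => lift d A lam j k)); auto.
Qed.

Lemma dot_P_le nrm q B : in_P d N A lam q ->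
  (forall j, (j < N)%nat -> dot (S d) nrm (lift d A lam j) <= B) -> dot (S d) nrm q <= B.
Proof.
  intros [mu [Hmu [Hs Hq]]] HB. unfold dot.
  rewrite (rsum_ext _ _ (fun k => rsum N (fun j => mu j * (nrm k * lift d A lam j k)))).
  2:{ intros k Hk. rewrite Hq by lia. rewrite <- rsum_scal. apply rsum_ext. intros; ring. }
  rewrite rsum_swap.
  rewrite (rsum_ext _ _ (fun j => mu j * dot (S d) nrm (lift d A lam j)))
    by (intros; unfold dot; rewrite <- rsum_scal; auto).
  apply Rle_trans with (rsum N (fun j => B * mu j)).
  - apply rsum_le. intros j Hj. rewrite (Rmult_comm B). apply Rmult_le_compat_l; auto.
  - rewrite rsum_scal, Hs. lra.
Qed.

Lemma dot_lift_height nrm i : 0 < nrm d ->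
  dot (S d) nrm (lift d A lam i) = nrm d * height (fun k => nrm k / nrm d) i.
Proof.
  intros Hd. rewrite dot_lift. unfold height.
  rewrite Rmult_plus_distr_l, <- rsum_scal, (Rplus_comm (rsum d _)). f_equal.
  apply rsum_ext. intros. field. lra.
Qed.

Lemma upper_face_iff nrm i : 0 < nrm d -> (i < N)%nat ->
  face_with_normal d N A lam nrm (lift d A lam i) <-> top_face (fun k => nrm k / nrm d) i.
Proof.
  intros Hd Hi. split.
  - intros [_ Hmax]. split; auto. intros j Hj.
    specialize (Hmax _ (in_P_lift j Hj)). rewrite !dot_lift_height in Hmax by auto.
    apply Rmult_le_reg_l with (nrm d); auto.
  - intros [_ Hmax]. split; [apply in_P_lift; auto|]. intros q Hq.
    apply dot_P_le; auto. intros j Hj. rewrite !dot_lift_height by auto.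
    apply Rmult_le_compat_l; [lra | auto].
Qed.

Lemma top_face_ext v v' i : (forall j, (j < d)%nat -> v j = v' j) ->
  top_face v i <-> top_face v' i.
Proof.
  intros Hv. assert (Hh : forall k, height v k = height v' k).
  { intros k. unfold height. f_equal. apply rsum_ext. intros j Hj. rewrite Hv; auto. }
  unfold top_face. setoid_rewrite Hh. tauto.
Qed.

Lemma top_face_is_face v : face_of_Slam d N A lam (top_face v).
Proof.
  set (nrm := fun k => if Nat.eqb k d then 1 else v k).
  assert (Hd : nrm d = 1) by (unfold nrm; rewrite Nat.eqb_refl; auto).
  assert (Hdir : forall j, (j < d)%nat -> nrm j / nrm d = v j).
  { intros j Hj. rewrite Hd. unfold nrm. destruct (Nat.eqb_spec j d); [lia | field]. }
  exists nrm. split; [lra|]. intros i.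
  split.
  - intros Hi. split; [apply Hi|]. apply upper_face_iff; [lra | apply Hi|].
    apply (top_face_ext _ _ i Hdir), Hi.
  - intros [Hi Hf]. apply upper_face_iff in Hf; [|lra | auto].
    apply (top_face_ext _ _ i Hdir), Hf.
Qed.

Lemma face_is_top_face F : face_of_Slam d N A lam F ->
  exists v, forall i, F i <-> top_face v i.
Proof.
  intros [nrm [Hd HF]]. exists (fun k => nrm k / nrm d). intros i. rewrite HF.
  split.
  - intros [Hi Hf]. apply upper_face_iff; auto.
  - intros Hf. split; [apply Hf|]. apply upper_face_iff; auto. apply Hf.
Qed.

Lemma top_face_flat v i j : top_face v i -> top_face v j -> height v i = height v j.
Proof.
  intros [Hi Hmi] [Hj Hmj]. specialize (Hmi j Hj). specialize (Hmj i Hi). lra.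
Qed.

Lemma top_face_gap v j0 : top_face v j0 -> exists del, 0 < del /\
  forall i, (i < N)%nat -> ~ top_face v i -> del <= height v j0 - height v i.
Proof.
  intros [Hj0 Hmax]. apply fin_pos_min. intros i Hi nF.
  apply Rnot_le_lt. intros Hle. apply nF. split; auto.
  intros j Hj. specialize (Hmax j Hj). lra.
Qed.

(** Row expressing [height v k <= height v i]. *)
Definition gap_row (i k : nat) : Row := (fun j => A k j - A i j, lam i - lam k).

Lemma lhs_gap_row v i k :
  lhs d (gap_row i k) v - snd (gap_row i k) = height v k - height v i.
Proof.
  unfold lhs, gap_row, height; simpl.
  rewrite (rsum_ext _ _ (fun j => A k j * v j - A i j * v j)) by (intros; ring).
  rewrite rsum_minus. ring.
Qed.

(** The system "every label of [P] is a top label". *)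
Definition gap_rows (P : nat -> Prop) : list Row :=
  flat_map (fun i => map (gap_row i) (seq 0 N)) (filter (fun i => dec (P i)) (seq 0 N)).

Lemma in_gap_rows P r :
  In r (gap_rows P) <-> exists i k, (i < N)%nat /\ P i /\ (k < N)%nat /\ r = gap_row i k.
Proof.
  unfold gap_rows. rewrite in_flat_map. split.
  - intros [i [Hi Hr]]. rewrite filter_In, in_seq in Hi.
    apply in_map_iff in Hr. destruct Hr as [k [<- Hk]]. rewrite in_seq in Hk.
    pose proof (dec_spec (P i)). destruct Hi as [Hi Hd]. rewrite Hd in *.
    exists i, k. repeat split; auto; lia.
  - intros [i [k [Hi [HP [Hk ->]]]]]. exists i. rewrite filter_In, in_seq, dec_true by auto.
    split; [split; auto; lia|]. apply in_map, in_seq. lia.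
Qed.

Lemma gap_dichotomy (P : nat -> Prop) :
  (exists v, forall i, (i < N)%nat -> P i -> forall k, (k < N)%nat -> height v k <= height v i)
  \/ (exists e, 0 < e /\ forall v, exists i k,
        (i < N)%nat /\ P i /\ (k < N)%nat /\ e <= height v k - height v i).
Proof.
  destruct (classic (feasible d (gap_rows P))) as [[v Hv]|NF].
  - left. exists v. intros i Hi HP k Hk.
    specialize (Hv _ (proj2 (in_gap_rows P _) (ex_intro _ i (ex_intro _ k
      (conj Hi (conj HP (conj Hk eq_refl))))))).
    pose proof (lhs_gap_row v i k). lra.
  - right. assert (NA : ~ approx_feasible d (gap_rows P))
      by (intros H; apply NF, approx_feasible_feasible, H).
    apply not_all_ex_not in NA. destruct NA as [e NA].
    apply imply_to_and in NA. destruct NA as [He NA].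
    exists e. split; auto. intros v. apply NNPP. intros Hno. apply NA. exists v.
    intros r Hr. apply in_gap_rows in Hr. destruct Hr as [i [k [Hi [HP [Hk ->]]]]].
    apply Rnot_lt_le. intros Hlt. apply Hno. exists i, k. repeat split; auto.
    pose proof (lhs_gap_row v i k). lra.
Qed.

Lemma uniform_gap : exists c, 0 < c /\ forall v, exists v', forall i, (i < N)%nat ->
  (forall k, (k < N)%nat -> height v k - height v i < c) -> top_face v' i.
Proof.
  destruct (common_pos_param_maps 1 N (fun f c =>
    (exists v', forall i, (i < N)%nat -> f i = 1%nat ->
       forall k, (k < N)%nat -> height v' k <= height v' i) \/
    (forall v, exists i k, (i < N)%nat /\ f i = 1%nat /\ (k < N)%nat /\
       c <= height v k - height v i))) as [c [Hc Hall]].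
  - intros f g e Hfg [[v' Hv']|H2]; [left|right].
    + exists v'. intros i Hi Hg. apply Hv'; auto. rewrite Hfg; auto.
    + intros v. destruct (H2 v) as [i [k [Hi [Hf Hk]]]].
      exists i, k. rewrite <- Hfg; auto.
  - intros f e e' _ Hle [H1|H2]; [left; auto|right]. intros v.
    destruct (H2 v) as [i [k [Hi [Hf [Hk Hg]]]]]. exists i, k. repeat split; auto. lra.
  - intros f _. destruct (gap_dichotomy (fun i => f i = 1%nat)) as [H1|[e [He H2]]].
    + exists 1. split; [lra | left; auto].
    + exists e. split; [auto | right; auto].
  - exists c. split; auto. intros v.
    set (f := fun i => if dec (forall k, (k < N)%nat -> height v k - height v i < c)
                       then 1%nat else 0%nat).
    destruct (Hall f) as [[v' Hv']|H2].
    + intros i. unfold f. destruct (dec _); lia.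
    + exists v'. intros i Hi Hgap. split; auto. apply Hv'; auto.
      unfold f. rewrite dec_true; auto.
    + exfalso. destruct (H2 v) as [i [k [Hi [Hf [Hk Hg]]]]]. unfold f in Hf.
      pose proof (dec_spec (forall k, (k < N)%nat -> height v k - height v i < c)) as Hs.
      destruct (dec _); [|discriminate]. specialize (Hs k Hk). lra.
Qed.

End Subdivision.

Lemma simplex_N N z : in_simplex N z -> (0 < N)%nat.
Proof. intros [_ [H _]]. destruct N; [simpl in H; lra | lia]. Qed.

Definition normalize (N : nat) (p : nat -> R) : nat -> R :=
  fun i => if Nat.ltb i N then p i / rsum N p else 0.

Lemma normalize_simplex N p : (0 < N)%nat -> (forall i, (i < N)%nat -> 0 < p i) ->
  in_simplex N (normalize N p) /\ forall i, (i < N)%nat -> 0 < normalize N p i.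
Proof.
  intros HN Hp. pose proof (rsum_pos N p HN Hp) as HS.
  assert (Hpos : forall i, (i < N)%nat -> 0 < normalize N p i).
  { intros i Hi. unfold normalize. destruct (Nat.ltb_spec i N); [|lia].
    apply Rdiv_lt_0_compat; auto. }
  split; [|auto]. split; [|split].
  - intros i Hi; apply Rlt_le; auto.
  - unfold normalize. rewrite (rsum_ext _ _ (fun i => / rsum N p * p i)).
    + rewrite rsum_scal. field. lra.
    + intros i Hi. destruct (Nat.ltb_spec i N); [|lia]. unfold Rdiv; ring.
  - intros i Hi. unfold normalize. destruct (Nat.ltb_spec i N); [lia | auto].
Qed.

Lemma normalize_le_ratio N p i k : (forall j, (j < N)%nat -> 0 < p j) ->
  (i < N)%nat -> (k < N)%nat -> normalize N p i <= p i / p k.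
Proof.
  intros Hp Hi Hk. unfold normalize. destruct (Nat.ltb_spec i N); [|lia].
  apply Rmult_le_compat_l; [apply Rlt_le; auto|].
  apply Rinv_le_contravar; [auto|]. apply rsum_elem_le; auto.
  intros; apply Rlt_le; auto.
Qed.

Definition in_mass (N : nat) (F : nat -> Prop) (y : nat -> R) : R :=
  rsum N (fun i => if dec (F i) then y i else 0).
Definition out_mass (N : nat) (F : nat -> Prop) (y : nat -> R) : R :=
  rsum N (fun i => if dec (F i) then 0 else y i).

Definition restrict (N : nat) (F : nat -> Prop) (y : nat -> R) : nat -> R :=
  fun i => if Nat.ltb i N then (if dec (F i) then y i / in_mass N F y else 0) else 0.

Lemma in_mass_pos N F y j0 : F j0 -> (j0 < N)%nat -> 0 < y j0 ->
  (forall i, (i < N)%nat -> 0 <= y i) -> 0 < in_mass N F y.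
Proof.
  intros Fj0 Hj0 Hy0 Hy. unfold in_mass.
  apply Rlt_le_trans with ((fun i => if dec (F i) then y i else 0) j0).
  - simpl. rewrite dec_true by auto. auto.
  - apply (rsum_elem_le N (fun i => if dec (F i) then y i else 0) j0); auto.
    intros i Hi. destruct (dec (F i)); [auto | lra].
Qed.

Lemma restrict_face N F y : (forall i, (i < N)%nat -> 0 <= y i) -> 0 < in_mass N F y ->
  in_face_simplex N F (restrict N F y).
Proof.
  intros Hy Hm. split; [split; [|split]|].
  - intros i Hi. unfold restrict. destruct (Nat.ltb_spec i N); [|lia].
    destruct (dec (F i)); [|lra]. apply Rmult_le_pos; auto.
    apply Rlt_le, Rinv_0_lt_compat; auto.
  - unfold restrict. rewrite (rsum_ext _ _ (fun i => / in_mass N F y *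
      (if dec (F i) then y i else 0))).
    + rewrite rsum_scal. fold (in_mass N F y). field. lra.
    + intros i Hi. destruct (Nat.ltb_spec i N); [|lia]. destruct (dec (F i)); unfold Rdiv; ring.
  - intros i Hi. unfold restrict. destruct (Nat.ltb_spec i N); [lia | auto].
  - intros i Hi nF. unfold restrict. destruct (Nat.ltb_spec i N); [|lia].
    rewrite dec_false by auto. auto.
Qed.

Lemma restrict_dist N F y : in_simplex N y -> 0 < in_mass N F y ->
  dist1 N y (restrict N F y) <= 2 * out_mass N F y.
Proof.
  intros [Hy0 [Hy1 _]] Hm. set (m := in_mass N F y) in *.
  assert (Hsplit : m + out_mass N F y = 1).
  { unfold m, in_mass, out_mass. rewrite <- rsum_plus, <- Hy1.
    apply rsum_ext. intros i _. destruct (dec (F i)); lra. }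
  assert (Ho : 0 <= out_mass N F y)
    by (apply rsum_nonneg; intros i Hi; destruct (dec (F i)); auto; lra).
  assert (Hinv : 1 <= / m) by (rewrite <- Rinv_1; apply Rinv_le_contravar; lra).
  unfold dist1. rewrite (rsum_ext _ _ (fun i => (/ m - 1) * (if dec (F i) then y i else 0)
                                               + (if dec (F i) then 0 else y i))).
  - rewrite rsum_plus, rsum_scal. fold (in_mass N F y) m (out_mass N F y).
    replace ((/ m - 1) * m) with (1 - m) by (field; lra). lra.
  - intros i Hi. unfold restrict. fold m. destruct (Nat.ltb_spec i N); [|lia].
    specialize (Hy0 i Hi). destruct (dec (F i)).
    + replace (y i - y i / m) with (- ((/ m - 1) * y i)) by (field; lra).
      rewrite Rabs_Ropp, Rabs_right; [ring|]. apply Rle_ge, Rmult_le_pos; lra.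
    + rewrite Rminus_0_r, Rabs_right by lra. ring.
Qed.

Lemma restrict_scale N F y y' kappa : 0 < kappa -> 0 < in_mass N F y ->
  (forall i, (i < N)%nat -> F i -> y' i = kappa * y i) ->
  restrict N F y' = restrict N F y.
Proof.
  intros Hk Hm Hy. assert (Hm' : in_mass N F y' = kappa * in_mass N F y).
  { unfold in_mass. rewrite <- rsum_scal. apply rsum_ext. intros i Hi.
    pose proof (dec_spec (F i)). destruct (dec (F i)); [apply Hy; auto | ring]. }
  apply functional_extensionality. intros i. unfold restrict.
  destruct (Nat.ltb_spec i N); auto. pose proof (dec_spec (F i)).
  destruct (dec (F i)); auto. rewrite Hm', Hy by auto. field. lra.
Qed.

Lemma restrict_face_point N F z : in_face_simplex N F z -> restrict N F z = z.
Proof.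
  intros [[Hz0 [Hz1 Hz2]] HzF]. assert (Hm : in_mass N F z = 1).
  { rewrite <- Hz1. apply rsum_ext. intros i Hi. pose proof (dec_spec (F i)).
    destruct (dec (F i)); [auto | symmetry; apply HzF; auto]. }
  apply functional_extensionality. intros i. unfold restrict. rewrite Hm.
  destruct (Nat.ltb_spec i N); [|symmetry; apply Hz2; lia].
  pose proof (dec_spec (F i)). destruct (dec (F i)); [field | symmetry; apply HzF; auto].
Qed.

Lemma face_simplex_nonempty N F z : in_face_simplex N F z -> exists j, (j < N)%nat /\ F j.
Proof.
  intros [[_ [Hz1 _]] HzF]. apply NNPP. intros Hno.
  assert (rsum N z = 0).
  { rewrite <- (rsum_zero N). apply rsum_ext. intros i Hi.
    apply HzF; auto. intros Fi. apply Hno. eauto. }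
  lra.
Qed.

Lemma out_mass_decay N F q g t c qlo qhi : 0 < qlo -> 0 <= t ->
  (forall i, (i < N)%nat -> qlo <= q i <= qhi) ->
  (forall i, (i < N)%nat -> ~ F i -> exists k, (k < N)%nat /\ c <= g k - g i) ->
  out_mass N F (normalize N (fun i => q i * exp (t * g i))) <=
  INR N * (qhi / qlo * exp (- (t * c))).
Proof.
  intros Hlo Ht Hq Hgap. set (p := fun i => q i * exp (t * g i)).
  assert (Hp : forall i, (i < N)%nat -> 0 < p i).
  { intros i Hi. unfold p. specialize (Hq i Hi).
    apply Rmult_lt_0_compat; [lra | apply exp_pos]. }
  unfold out_mass. apply rsum_const_le. intros i Hi.
  assert (0 <= qhi / qlo * exp (- (t * c))).
  { destruct (Hq i Hi). apply Rmult_le_pos; [apply Rmult_le_pos|apply Rlt_le, exp_pos].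
    - lra.
    - apply Rlt_le, Rinv_0_lt_compat; auto. }
  pose proof (dec_spec (F i)). destruct (dec (F i)); [auto|].
  destruct (Hgap i Hi ltac:(auto)) as [k [Hk Hc]].
  eapply Rle_trans; [apply (normalize_le_ratio N p i k Hp Hi Hk)|].
  destruct (Hq i Hi) as [Hqi0 Hqi], (Hq k Hk) as [Hqk _].
  unfold p. replace (q i * exp (t * g i) / (q k * exp (t * g k)))
    with (q i / q k * exp (- (t * (g k - g i)))).
  2:{ replace (- (t * (g k - g i))) with (t * g i + - (t * g k)) by ring.
      rewrite exp_plus, exp_Ropp. field. split; [apply Rgt_not_eq, exp_pos | lra]. }
  apply Rmult_le_compat.
  - apply Rlt_le, Rdiv_lt_0_compat; lra.
  - apply Rlt_le, exp_pos.
  - unfold Rdiv. apply Rmult_le_compat; try lra.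
    + apply Rlt_le, Rinv_0_lt_compat; lra.
    + apply Rinv_le_contravar; lra.
  - destruct (Req_dec (t * (g k - g i)) (t * c)) as [Heq|Hne]; [rewrite Heq; lra|].
    left. apply exp_increasing.
    assert (t * c <= t * (g k - g i)) by (apply Rmult_le_compat_l; lra). lra.
Qed.

Lemma restrict_concentrated N F q g t j0 : F j0 -> (j0 < N)%nat ->
  (forall i, (i < N)%nat -> 0 < q i) ->
  (forall i, (i < N)%nat -> F i -> g i = g j0) ->
  restrict N F (normalize N (fun i => q i * exp (t * g i))) = restrict N F q.
Proof.
  intros Fj0 Hj0 Hq Hg.
  assert (Hp : forall i, (i < N)%nat -> 0 < q i * exp (t * g i))
    by (intros; apply Rmult_lt_0_compat; [auto | apply exp_pos]).
  pose proof (rsum_pos N _ ltac:(lia) Hp) as HS.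
  apply restrict_scale with (kappa := exp (t * g j0) / rsum N (fun i => q i * exp (t * g i))).
  - apply Rdiv_lt_0_compat; [apply exp_pos | auto].
  - apply (in_mass_pos N F q j0); auto. intros; apply Rlt_le; auto.
  - intros i Hi Fi. unfold normalize. destruct (Nat.ltb_spec i N); [|lia].
    rewrite (Hg i Hi Fi). field. lra.
Qed.

Lemma orbit_in_closure d N A F w z : torus_orbit_pt d N A F w z -> X_Fw d N A F w z.
Proof.
  intros H. split; [apply H|]. intros eps He. exists z. split; auto.
  rewrite dist1_refl; auto.
Qed.

Lemma monomial_exp d s a :
  monomial d (fun j => exp (s j)) a = exp (rsum d (fun j => a j * s j)).
Proof. unfold monomial. f_equal. apply rsum_ext. intros. rewrite ln_exp. auto. Qed.

Lemma torus_act_normalized N u z y : torus_act N u z y ->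
  forall i, (i < N)%nat -> y i = u i * z i / rsum N (fun j => u j * z j).
Proof.
  intros [[_ [Hy1 _]] [c [Hc Hy]]] i Hi.
  assert (HcS : c * rsum N (fun j => u j * z j) = 1).
  { rewrite <- Hy1, <- rsum_scal. symmetry. apply rsum_ext. auto. }
  assert (HS : rsum N (fun j => u j * z j) <> 0) by (intros H0; rewrite H0 in HcS; lra).
  rewrite Hy, <- (Rmult_1_l (u i * z i / _)), <- HcS by auto. field. auto.
Qed.

Lemma normalize_dist N a b :
  (forall i, (i < N)%nat -> 0 <= b i) -> 0 < rsum N a -> 0 < rsum N b ->
  dist1 N (fun i => a i / rsum N a) (fun i => b i / rsum N b) <= 2 * dist1 N a b / rsum N a.
Proof.
  intros Hb Ha0 Hb0. set (al := rsum N a) in *. set (be := rsum N b) in *.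
  set (K := Rabs (/ al - / be)).
  apply Rle_trans with (rsum N (fun i => / al * Rabs (a i - b i) + b i * K)).
  - apply rsum_le. intros i Hi.
    replace (a i / al - b i / be) with (/ al * (a i - b i) + b i * (/ al - / be))
      by (field; lra).
    eapply Rle_trans; [apply Rabs_triang|]. rewrite !Rabs_mult.
    rewrite (Rabs_right (/ al)) by (apply Rle_ge, Rlt_le, Rinv_0_lt_compat; auto).
    rewrite (Rabs_right (b i)) by (apply Rle_ge; auto). unfold K. lra.
  - rewrite rsum_plus, rsum_scal.
    rewrite (rsum_ext N (fun i => b i * K) (fun i => K * b i)) by (intros; ring).
    rewrite rsum_scal. fold be. fold (dist1 N a b).
    assert (HK : be * K = Rabs (be - al) / al).
    { unfold K. replace (/ al - / be) with ((be - al) / (al * be)) by (field; lra).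
      unfold Rdiv. rewrite Rabs_mult, (Rabs_right (/ (al * be)))
        by (apply Rle_ge, Rlt_le, Rinv_0_lt_compat, Rmult_lt_0_compat; auto).
      field. lra. }
    assert (Hdiff : Rabs (be - al) <= dist1 N a b).
    { unfold be, al. rewrite <- rsum_minus, dist1_sym. apply rsum_abs. }
    rewrite (Rmult_comm K be), HK. unfold Rdiv.
    assert (0 < / al) by (apply Rinv_0_lt_compat; auto). nra.
Qed.

Lemma act_lipschitz N u z z' x y umin umax : 0 < umin ->
  (forall i, (i < N)%nat -> umin <= u i <= umax) -> in_simplex N z -> in_simplex N z' ->
  torus_act N u z x -> torus_act N u z' y -> dist1 N x y <= 2 * umax / umin * dist1 N z z'.
Proof.
  intros Hmin Hu Hz Hz' Hx Hy. destruct Hz as [Hz0 [Hz1 _]], Hz' as [Hz0' [Hz1' _]].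
  set (a := fun j => u j * z j). set (b := fun j => u j * z' j).
  assert (Hmass : forall z0, (forall i, (i < N)%nat -> 0 <= z0 i) -> rsum N z0 = 1 ->
            umin <= rsum N (fun j => u j * z0 j)).
  { intros z0 H0 H1. rewrite <- (Rmult_1_r umin), <- H1, <- rsum_scal. apply rsum_le.
    intros i Hi. specialize (Hu i Hi). specialize (H0 i Hi). nra. }
  assert (Ha : umin <= rsum N a) by (apply Hmass; auto).
  assert (Hb : umin <= rsum N b) by (apply Hmass; auto).
  assert (Hab : dist1 N a b <= umax * dist1 N z z').
  { unfold dist1. rewrite <- rsum_scal. apply rsum_le. intros i Hi. unfold a, b.
    rewrite <- Rmult_minus_distr_l, Rabs_mult. specialize (Hu i Hi).
    rewrite (Rabs_right (u i)) by lra. apply Rmult_le_compat_r; [apply Rabs_pos | lra]. }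
  replace (dist1 N x y) with (dist1 N (fun i => a i / rsum N a) (fun i => b i / rsum N b)).
  2:{ apply rsum_ext. intros i Hi.
      rewrite (torus_act_normalized N u z x Hx), (torus_act_normalized N u z' y Hy); auto. }
  eapply Rle_trans; [apply normalize_dist; [|lra|lra]|].
  - intros i Hi. unfold b. specialize (Hu i Hi). specialize (Hz0' i Hi). nra.
  - pose proof (dist1_nonneg N a b). pose proof (dist1_nonneg N z z').
    apply Rle_trans with (2 * dist1 N a b / umin).
    + unfold Rdiv. apply Rmult_le_compat_l; [lra|]. apply Rinv_le_contravar; lra.
    + replace (2 * umax / umin * dist1 N z z') with (2 * (umax * dist1 N z z') / umin)
        by (field; lra).
      unfold Rdiv. apply Rmult_le_compat_r; [apply Rlt_le, Rinv_0_lt_compat|]; lra.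
Qed.

Lemma round_nat M y : 0 <= y <= INR M -> exists k, (k <= M)%nat /\ Rabs (y - INR k) <= 1.
Proof.
  induction M as [|M IH]; intros [H1 H2].
  - exists 0%nat. split; auto. simpl in *. replace (y - 0) with 0 by lra.
    rewrite Rabs_R0; lra.
  - rewrite S_INR in H2. destruct (Rle_dec y (INR M)).
    + destruct IH as [k [Hk Hk']]; [lra|]. exists k. split; auto.
    + exists (S M). split; auto. rewrite S_INR, Rabs_left1 by lra. lra.
Qed.

Definition grid_point (M : nat) (f : nat -> nat) : nat -> R := fun i => INR (f i) / INR M.

Lemma grid_approx N M z : (0 < M)%nat -> in_simplex N z ->
  exists f, (forall i, (f i <= M)%nat) /\ dist1 N z (grid_point M f) <= INR N / INR M.
Proof.
  intros HM [Hz0 [Hz1 _]]. assert (HMr : 0 < INR M) by (apply lt_0_INR; auto).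
  assert (H : forall i, exists k, (k <= M)%nat /\
    ((i < N)%nat -> Rabs (z i - INR k / INR M) <= / INR M)).
  { intros i. destruct (Nat.lt_ge_cases i N) as [Hi|Hi].
    - assert (z i <= 1) by (rewrite <- Hz1; apply rsum_elem_le; auto).
      specialize (Hz0 i Hi).
      destruct (round_nat M (z i * INR M)) as [k [Hk Hk']]; [split; nra|].
      exists k. split; auto. intros _.
      replace (z i - INR k / INR M) with ((z i * INR M - INR k) * / INR M) by (field; lra).
      rewrite Rabs_mult, (Rabs_right (/ INR M))
        by (apply Rle_ge, Rlt_le, Rinv_0_lt_compat; auto).
      pose proof (Rinv_0_lt_compat _ HMr). nra.
    - exists 0%nat. split; [lia | intros; lia]. }
  destruct (choice _ H) as [f Hf]. exists f. split; [apply Hf|].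
  unfold dist1, Rdiv. apply rsum_const_le. intros i Hi. apply Hf, Hi.
Qed.

Section Degeneration.

Variables (d N : nat) (A : nat -> nat -> R) (lam w : nat -> R).
Hypothesis Hw : forall i, (i < N)%nat -> 0 < w i.

Definition family (t : R) : (nat -> R) -> Prop :=
  act_set N (lam_t lam t) (X_Fw d N A (fun i => (i < N)%nat) w).
Definition limit : (nat -> R) -> Prop := X_subdiv d N A lam w.

(** Homogeneous coordinates of [lam(t).[w x^a]] with [x = exp s]. *)
Definition orbit_point (t : R) (s : nat -> R) (i : nat) : R :=
  w i * exp (t * lam i + rsum d (fun j => A i j * s j)).

Lemma orbit_point_pos t s i : (i < N)%nat -> 0 < orbit_point t s i.
Proof. intros Hi. apply Rmult_lt_0_compat; [auto | apply exp_pos]. Qed.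

Lemma orbit_point_factor t s v i : orbit_point t s i =
  w i * monomial d (fun j => exp (s j - t * v j)) (A i) * exp (t * height d A lam v i).
Proof.
  unfold orbit_point, height. rewrite monomial_exp, Rmult_assoc, <- exp_plus.
  do 2 f_equal.
  rewrite (rsum_ext d (fun j => A i j * (s j - t * v j))
    (fun j => A i j * s j - t * (A i j * v j))) by (intros; ring).
  rewrite rsum_minus, rsum_scal. ring.
Qed.

Lemma orbit_point_height t s i : t <> 0 ->
  orbit_point t s i = w i * exp (t * height d A lam (fun j => s j / t) i).
Proof.
  intros Ht. rewrite (orbit_point_factor t s (fun j => s j / t)), monomial_exp.
  rewrite (rsum_ext d _ (fun _ => 0)) by (intros; field; auto).
  rewrite rsum_zero, exp_0. ring.
Qed.

Lemma orbit_point_in_family t s : (0 < N)%nat -> family t (normalize N (orbit_point t s)).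
Proof.
  intros HN. set (q := fun i => w i * monomial d (fun j => exp (s j)) (A i)).
  assert (Hq : forall i, (i < N)%nat -> 0 < q i)
    by (intros; unfold q; apply Rmult_lt_0_compat; [auto | apply exp_pos]).
  destruct (normalize_simplex N q HN Hq) as [Sq _].
  destruct (normalize_simplex N _ HN (orbit_point_pos t s)) as [Sp _].
  pose proof (rsum_pos N q HN Hq). pose proof (rsum_pos N _ HN (orbit_point_pos t s)).
  exists (normalize N q). split.
  - apply orbit_in_closure. split; [split; auto; intros i Hi nF; contradiction|].
    exists (fun j => exp (s j)). split; [intros j _; apply exp_pos|].
    exists (/ rsum N q). split; [apply Rinv_0_lt_compat; auto|].
    intros i Hi _. unfold normalize. destruct (Nat.ltb_spec i N); [|lia].
    unfold q, Rdiv; ring.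
  - split; auto. exists (rsum N q / rsum N (orbit_point t s)).
    split; [apply Rdiv_lt_0_compat; auto|].
    intros i Hi. unfold normalize. destruct (Nat.ltb_spec i N); [|lia].
    assert (Hpq : orbit_point t s i = lam_t lam t i * q i)
      by (unfold orbit_point, lam_t, q; rewrite monomial_exp, exp_plus; ring).
    rewrite Hpq. field. split; lra.
Qed.

Lemma family_near_orbit_point t x delta : 0 < delta -> family t x ->
  exists s, dist1 N x (normalize N (orbit_point t s)) < delta.
Proof.
  intros Hdelta [z0 [[Hz0s Hz0c] Hact]].
  pose proof (simplex_N N z0 (proj1 Hz0s)) as HN.
  set (u := lam_t lam t).
  destruct (fin_pos_bounds N u) as [umin [umax [Humin Hub]]]; [intros; apply exp_pos|].
  assert (Humax : 0 < umax) by (destruct (Hub 0%nat HN); lra).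
  set (L := 2 * umax / umin).
  assert (HL : 0 < L) by (unfold L; apply Rdiv_lt_0_compat; lra).
  destruct (Hz0c (delta / (L + 1))) as [z' [Horb Hdz]]; [apply Rdiv_lt_0_compat; lra|].
  destruct Horb as [Hz'f [x' [Hx'pos [c' [Hc' Hz']]]]].
  exists (fun j => ln (x' j)).
  destruct (normalize_simplex N _ HN (orbit_point_pos t (fun j => ln (x' j)))) as [Hys _].
  pose proof (rsum_pos N _ HN (orbit_point_pos t (fun j => ln (x' j)))) as HS.
  assert (Hyact : torus_act N u z' (normalize N (orbit_point t (fun j => ln (x' j))))).
  { split; auto. exists (/ (c' * rsum N (orbit_point t (fun j => ln (x' j))))).
    split; [apply Rinv_0_lt_compat, Rmult_lt_0_compat; auto|].
    intros i Hi. unfold normalize. destruct (Nat.ltb_spec i N); [|lia].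
    assert (Hp : orbit_point t (fun j => ln (x' j)) i = u i * (w i * monomial d x' (A i)))
      by (unfold orbit_point, u, lam_t, monomial; rewrite exp_plus; ring).
    rewrite Hz', Hp by auto. field. split; lra. }
  eapply Rle_lt_trans.
  { apply (act_lipschitz N u z0 z' x _ umin umax); auto; [apply Hz0s | apply Hz'f]. }
  fold L. apply Rle_lt_trans with (L * (delta / (L + 1))).
  - apply Rmult_le_compat_l; lra.
  - apply Rmult_lt_reg_r with (L + 1); [lra|].
    replace (L * (delta / (L + 1)) * (L + 1)) with (L * delta) by (field; lra). nra.
Qed.

Lemma pushed_orbit_point t v x : positive_vec d x ->
  normalize N (orbit_point t (fun j => ln (x j) + t * v j)) =
  normalize N (fun i => w i * monomial d x (A i) * exp (t * height d A lam v i)).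
Proof.
  intros Hx. f_equal. apply functional_extensionality. intros i.
  rewrite (orbit_point_factor t _ v). unfold monomial. do 3 f_equal.
  apply rsum_ext. intros j Hj.
  replace (ln (x j) + t * v j - t * v j) with (ln (x j)) by ring.
  rewrite ln_exp. reflexivity.
Qed.

Lemma restrict_is_orbit F j0 x : positive_vec d x -> F j0 -> (j0 < N)%nat ->
  torus_orbit_pt d N A F w (restrict N F (fun i => w i * monomial d x (A i))).
Proof.
  intros Hx Fj0 Hj0. set (q := fun i => w i * monomial d x (A i)).
  assert (Hq : forall i, (i < N)%nat -> 0 < q i)
    by (intros; apply Rmult_lt_0_compat; [auto | apply exp_pos]).
  assert (Hm : 0 < in_mass N F q)
    by (apply (in_mass_pos N F q j0); auto; intros; apply Rlt_le; auto).
  split; [apply restrict_face; auto; intros; apply Rlt_le; auto|].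
  exists x. split; auto. exists (/ in_mass N F q). split; [apply Rinv_0_lt_compat; auto|].
  intros i Hi Fi. unfold restrict. destruct (Nat.ltb_spec i N); [|lia].
  rewrite dec_true by auto. unfold q, Rdiv. ring.
Qed.


(** ** Every point of [lam(t).X_(A,w)] is close to the limit *)

(** An orbit point is within [O(exp(-tc))] of the limit, [c] being the uniform gap:
    its mass concentrates on the top face of the direction [v'] provided by the
    key lemma, and its restriction to that face is an orbit point of the face. *)
Lemma orbit_point_near_limit c wlo whi t s : 0 < c ->
  (forall v, exists v', forall i, (i < N)%nat ->
     (forall k, (k < N)%nat -> height d A lam v k - height d A lam v i < c) ->
     top_face d N A lam v' i) ->
  0 < wlo -> (forall i, (i < N)%nat -> wlo <= w i <= whi) -> (0 < N)%nat -> 0 < t ->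
  exists z, limit z /\
    dist1 N (normalize N (orbit_point t s)) z <= 2 * (INR N * (whi / wlo * exp (- (t * c)))).
Proof.
  intros Hc Hgap Hwlo Hwb HN Ht. set (v := fun j => s j / t).
  destruct (Hgap v) as [v' Hv']. set (F := top_face d N A lam v').
  destruct (fin_argmax N (height d A lam v) HN) as [j0 [Hj0 Hmax]].
  assert (Fj0 : F j0).
  { apply Hv'; auto. intros k Hk. specialize (Hmax k Hk). lra. }
  set (y := normalize N (orbit_point t s)).
  destruct (normalize_simplex N _ HN (orbit_point_pos t s)) as [Hys Hypos].
  assert (Hm : 0 < in_mass N F y)
    by (apply (in_mass_pos N F y j0); auto; intros; apply Rlt_le; auto).
  exists (restrict N F y). split.
  - exists F. split; [apply top_face_is_face|]. apply orbit_in_closure.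
    set (x := fun j => exp (s j - t * v' j)).
    assert (Hy : y = normalize N (fun i => (w i * monomial d x (A i)) *
                                          exp (t * height d A lam v' i)))
      by (unfold y; f_equal; apply functional_extensionality; intros; apply orbit_point_factor).
    rewrite Hy, (restrict_concentrated N F _ _ t j0); auto.
    + apply (restrict_is_orbit F j0); auto. intros j _. apply exp_pos.
    + intros i Hi. apply Rmult_lt_0_compat; [auto | apply exp_pos].
    + intros i Hi Fi. apply (top_face_flat d N A lam v'); auto.
  - eapply Rle_trans; [apply restrict_dist; auto|]. apply Rmult_le_compat_l; [lra|].
    assert (Hy : y = normalize N (fun i => w i * exp (t * height d A lam v i)))
      by (unfold y; f_equal; apply functional_extensionality; intros;
          apply orbit_point_height; lra).
    rewrite Hy. apply out_mass_decay; auto; [lra|].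
    intros i Hi nF. apply NNPP. intros Hno. apply nF, Hv'; auto.
    intros k Hk. apply Rnot_le_lt. intros Hle. apply Hno. exists k. auto.
Qed.

Lemma family_near_limit eps : 0 < eps -> exists T, forall t, T < t ->
  forall x, family t x -> exists y, limit y /\ dist1 N x y < eps.
Proof.
  intros He. destruct (uniform_gap d N A lam) as [c [Hc Hgap]].
  destruct (fin_pos_bounds N w Hw) as [wlo [whi [Hwlo Hwb]]].
  destruct (exp_decay (2 * (INR N * (whi / wlo))) c (eps / 2)) as [T HT]; [auto | lra|].
  exists (Rmax 0 T). intros t Ht x Hx.
  assert (Ht0 : 0 < t) by (pose proof (Rmax_l 0 T); lra).
  assert (HTt : T < t) by (pose proof (Rmax_r 0 T); lra).
  assert (HN : (0 < N)%nat) by (destruct Hx as [z0 [_ [Hxs _]]]; apply (simplex_N N x Hxs)).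
  destruct (family_near_orbit_point t x (eps / 2)) as [s Hs]; [lra | auto|].
  destruct (orbit_point_near_limit c wlo whi t s) as [z [Hz Hdz]]; auto.
  exists z. split; auto. specialize (HT t HTt).
  eapply Rle_lt_trans; [apply (dist1_triangle N x (normalize N (orbit_point t s)))|].
  replace (2 * (INR N * (whi / wlo * exp (- (t * c)))))
    with (2 * (INR N * (whi / wlo)) * exp (- (t * c))) in Hdz by ring.
  lra.
Qed.

(** ** Every point of the limit is approached by [lam(t).X_(A,w)] *)

(** A point of a face [X_(F,w)] is approached: starting from an orbit point of the
    face, push its torus parameter along the direction [v] defining [F]. *)
Lemma face_point_approached F z eps : face_of_Slam d N A lam F -> X_Fw d N A F w z ->
  0 < eps -> exists T, forall t, T < t -> exists x, family t x /\ dist1 N x z < eps.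
Proof.
  intros HF [_ Hzc] He. destruct (face_is_top_face d N A lam F HF) as [v HFv].
  assert (EF : F = top_face d N A lam v) by (apply pred_ext, HFv). subst F.
  set (F := top_face d N A lam v). set (g := height d A lam v).
  destruct (Hzc (eps / 2)) as [z' [[Hz'f [x' [Hx' [c' [Hc' Hz']]]]] Hdz]]; [lra|].
  destruct (face_simplex_nonempty N F z' Hz'f) as [j0 [Hj0 Fj0]].
  destruct (top_face_gap d N A lam v j0 Fj0) as [del [Hdel Hdelb]].
  set (q := fun i => w i * monomial d x' (A i)).
  assert (Hq : forall i, (i < N)%nat -> 0 < q i)
    by (intros; apply Rmult_lt_0_compat; [auto | apply exp_pos]).
  destruct (fin_pos_bounds N q Hq) as [qlo [qhi [Hqlo Hqb]]].
  destruct (exp_decay (2 * (INR N * (qhi / qlo))) del (eps / 2)) as [T HT]; [auto | lra|].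
  exists (Rmax 0 T). intros t Ht.
  assert (Ht0 : 0 < t) by (pose proof (Rmax_l 0 T); lra).
  assert (HTt : T < t) by (pose proof (Rmax_r 0 T); lra).
  exists (normalize N (orbit_point t (fun j => ln (x' j) + t * v j))).
  split; [apply orbit_point_in_family; lia|].
  rewrite pushed_orbit_point by auto. fold g. set (y := normalize N (fun i => q i * exp (t * g i))).
  destruct (normalize_simplex N _ ltac:(lia) (fun i Hi => Rmult_lt_0_compat _ _ (Hq i Hi)
    (exp_pos (t * g i)))) as [Hys Hypos].
  assert (Hrz : restrict N F y = z').
  { unfold y. rewrite (restrict_concentrated N F q g t j0), <- (restrict_face_point N F z')
      by (auto; intros; apply (top_face_flat d N A lam v); auto).
    symmetry. apply restrict_scale with (kappa := c'); auto.
    apply (in_mass_pos N F q j0); auto. intros; apply Rlt_le; auto. }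
  assert (Hyz' : dist1 N y z' <= 2 * (INR N * (qhi / qlo * exp (- (t * del))))).
  { rewrite <- Hrz. eapply Rle_trans; [apply restrict_dist; auto|].
    - apply (in_mass_pos N F y j0); auto. intros; apply Rlt_le; auto.
    - apply Rmult_le_compat_l; [lra|]. apply out_mass_decay; auto; [lra|].
      intros i Hi nF. exists j0. split; auto. }
  specialize (HT t HTt).
  replace (2 * (INR N * (qhi / qlo * exp (- (t * del)))))
    with (2 * (INR N * (qhi / qlo)) * exp (- (t * del))) in Hyz' by ring.
  eapply Rle_lt_trans; [apply (dist1_triangle N y z')|]. rewrite (dist1_sym N z' z). lra.
Qed.

(** The approximation is uniform on a face: by compactness, in the form of a
    finite grid of the simplex. *)
Lemma face_uniformly_approached F eps : face_of_Slam d N A lam F -> 0 < eps ->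
  exists T, forall t, T < t -> forall z, X_Fw d N A F w z ->
    exists x, family t x /\ dist1 N x z < eps.
Proof.
  intros HF He. destruct (INR_archimed (eps / 4) (INR N)) as [M HM]; [lra|].
  pose proof (pos_INR N).
  assert (HM0 : (0 < M)%nat) by (destruct M; [simpl in HM; lra | lia]).
  assert (HMr : 0 < INR M) by (apply lt_0_INR; auto).
  set (delta := INR N / INR M).
  assert (Hdelta : delta < eps / 4).
  { unfold delta. apply Rmult_lt_reg_r with (INR M); auto.
    replace (INR N / INR M * INR M) with (INR N) by (field; lra). lra. }
  destruct (eventually_uniform_maps M N (fun f T => forall z0, X_Fw d N A F w z0 ->
      dist1 N z0 (grid_point M f) <= delta ->
      forall t, T < t -> exists x, family t x /\ dist1 N x z0 < eps)) as [T HT].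
  - intros f g T Hfg Hf z0 Hz0 Hd. apply (Hf z0 Hz0).
    replace (dist1 N z0 (grid_point M f)) with (dist1 N z0 (grid_point M g)); auto.
    apply rsum_ext. intros i Hi. unfold grid_point. rewrite Hfg; auto.
  - intros f T T' HTT' Hf z0 Hz0 Hd t Ht. apply (Hf z0 Hz0 Hd). lra.
  - intros f _. destruct (classic (exists zs, X_Fw d N A F w zs /\
                                 dist1 N zs (grid_point M f) <= delta)) as [[zs [Hzs Hdzs]]|NE].
    + destruct (face_point_approached F zs (eps / 2) HF Hzs) as [Ts HTs]; [lra|].
      exists Ts. intros z0 Hz0 Hd t Ht. destruct (HTs t Ht) as [x [Hx Hdx]].
      exists x. split; auto.
      assert (Hzz : dist1 N zs z0 <= 2 * delta).
      { eapply Rle_trans; [apply (dist1_triangle N zs (grid_point M f) z0)|].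
        rewrite (dist1_sym N (grid_point M f) z0). lra. }
      pose proof (dist1_triangle N x zs z0). lra.
    + exists 0. intros z0 Hz0 Hd. exfalso. apply NE. eauto.
  - exists T. intros t Ht z Hz.
    destruct (grid_approx N M z HM0 (proj1 (proj1 Hz))) as [f [Hf Hdf]].
    apply (HT f Hf z Hz Hdf t Ht).
Qed.

(** The approximation is uniform on the limit: there are finitely many faces. *)
Lemma limit_uniformly_approached eps : 0 < eps -> exists T, forall t, T < t ->
  forall z, limit z -> exists x, family t x /\ dist1 N x z < eps.
Proof.
  intros He.
  destruct (eventually_uniform_maps 1 N (fun f T => forall F,
      (forall i, F i <-> (i < N)%nat /\ f i = 1%nat) -> face_of_Slam d N A lam F ->
      forall t, T < t -> forall z, X_Fw d N A F w z ->
      exists x, family t x /\ dist1 N x z < eps)) as [T HT].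
  - intros f g T Hfg Hf F HFg. apply Hf. intros i. rewrite HFg.
    split; intros [Hi Hv]; split; auto; [rewrite Hfg | rewrite <- Hfg]; auto.
  - intros f T T' HTT' Hf F HFf HF t Ht. apply (Hf F HFf HF). lra.
  - intros f _. destruct (classic (exists F0, (forall i, F0 i <-> (i < N)%nat /\ f i = 1%nat)
                                       /\ face_of_Slam d N A lam F0)) as [[F0 [HF0f HF0]]|NE].
    + destruct (face_uniformly_approached F0 eps HF0 He) as [T HT].
      exists T. intros F HFf HF. replace F with F0; auto.
      apply pred_ext. intros i. rewrite HF0f, HFf. tauto.
    + exists 0. intros F HFf HF. exfalso. apply NE. eauto.
  - exists T. intros t Ht z [F [HF Hz]].
    set (f := fun i => if dec (F i) then 1%nat else 0%nat).
    assert (Hbound : forall i, (f i <= 1)%nat) by (intros i; unfold f; destruct (dec (F i)); lia).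
    apply (HT f Hbound F); auto.
    intros i. unfold f. pose proof (dec_spec (F i)). split.
    + intros Fi. destruct HF as [nrm [_ HF]]. split; [apply HF, Fi|].
      rewrite dec_true; auto.
    + intros [_ Hf]. destruct (dec (F i)); [auto | discriminate].
Qed.

End Degeneration.

(** The two halves of Hausdorff convergence; the points of [A] need not be distinct. *)

Theorem mainTheorem7 (d N : nat) (A : nat -> nat -> R)
    (HA : forall i j, (i < N)%nat -> (j < N)%nat ->
          (forall k, (k < d)%nat -> A i k = A j k) -> i = j)
    (lam w : nat -> R) (Hw : forall i, (i < N)%nat -> 0 < w i) :
  hausdorff_conv N
    (fun t => act_set N (lam_t lam t) (X_Fw d N A (fun i => (i < N)%nat) w))
    (X_subdiv d N A lam w).
Proof.
  intros eps He.
  destruct (family_near_limit d N A lam w Hw eps He) as [T1 H1].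
  destruct (limit_uniformly_approached d N A lam w Hw eps He) as [T2 H2].
  exists (Rmax T1 T2). intros t Ht. split.
  - apply (H1 t). pose proof (Rmax_l T1 T2). lra.
  - apply (H2 t). pose proof (Rmax_r T1 T2). lra.
Qed.
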